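(* Let $n\ge 4$ and let $H$ be obtained from the cycle $C_n$ by attaching a single new pendant vertex (leaf) to each of two vertices of $C_n$ whose distance in $C_n$ is $2k+1$ for some integer $k\ge 0$. Then $\chi_\rho(H)\ge 4$.
   Context: $d(u,v)$ is the shortest-path distance. A $k$-packing coloring of $G$ is a map $c:V(G)\to\{1,\dots,k\}$ such that whenever $u\neq v$ and $c(u)=c(v)=i$, we have $d(u,v)>i$. $\chi_\rho(G)$ is the least $k$ such that $G$ has a $k$-packing coloring. *)

From mathcomp Require Import all_boot.
Set Implicit Arguments. Unset Strict Implicit. Unset Printing Implicit Defensive.

Fixpoint within (T : finType) (e : rel T) (m : nat) (x y : T) : bool :=
  if m is m'.+1 then within e m' x y || [exists z, within e m' x z && e z y]
  else x == y.

(* Shortest-path distance d(x,y) > i  <=>  no walk of length <= i joins x,y. *)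
Definition dist_gt (T : finType) (e : rel T) (i : nat) (x y : T) : bool :=
  ~~ within e i x y.

Definition packing_coloring (T : finType) (e : rel T) (k : nat) (c : T -> nat) :=
  (forall x, 1 <= c x <= k) /\
  (forall x y, x != y -> c x = c y -> dist_gt e (c x) x y).

Definition packing_chromatic_ge (T : finType) (e : rel T) (m : nat) :=
  forall k c, packing_coloring e k c -> m <= k.

Definition cycle_adj (n : nat) (i j : 'I_n) : bool :=
  (i.+1 %% n == j) || (j.+1 %% n == i).

Definition cycle_dist (n : nat) (i j : 'I_n) : nat :=
  minn ((j + n - i) %% n) ((i + n - j) %% n).

(* H: vertices inl i (cycle vertices), inr false (leaf at u), inr true (leaf at v). *)
Definition H_adj (n : nat) (u v : 'I_n) (x y : 'I_n + bool) : bool :=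
  match x, y with
  | inl i, inl j => cycle_adj i j
  | inl i, inr b => i == (if b then v else u)
  | inr b, inl i => i == (if b then v else u)
  | inr _, inr _ => false
  end.

From mathcomp Require Import all_boot zify.

Set Implicit Arguments.
Unset Strict Implicit.
Unset Printing Implicit Defensive.

(* In a packing colouring with colours 1, 2, 3, a vertex with three neighbours
   cannot get colour 1: its neighbours are pairwise at distance at most 2, so
   they would need three distinct colours > 1.  Along a cycle of length at
   least 4, colour 1 must sit on every other vertex: two consecutive vertices
   coloured 2, 3 force colour 1 before the 2, and then the vertex before that
   has no colour left.  In H both attachment vertices have three neighbours,
   so neither is coloured 1, yet they are an odd distance apart on the cycle,
   which contradicts the alternation. *)

Section Within.

Variables (T : finType) (e : rel T).

Lemma within_mono m m' x y : m <= m' -> within e m x y -> within e m' x y.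
Proof.
elim: m' => [|m' IH]; first by rewrite leqn0 => /eqP ->.
by rewrite leq_eqVlt => /orP [/eqP -> // | /IH{}IH /IH /= ->].
Qed.

Lemma within_path x s : path e x s -> within e (size s) x (last x s).
Proof.
elim/last_ind: s => [|s y IH]; first by rewrite /= eqxx.
rewrite rcons_path size_rcons last_rcons => /andP [/IH w_xs e_sy] /=.
by apply/orP; right; apply/existsP; exists (last x s); rewrite w_xs.
Qed.

End Within.

Lemma packing_coloring_le (T : finType) (e : rel T) k k' c :
  k <= k' -> packing_coloring e k c -> packing_coloring e k' c.
Proof. by move=> le_kk' [c_range c_sep]; split=> // x; have := c_range x; lia. Qed.

Section PackingThree.

Variables (T : finType) (e : rel T) (c : T -> nat).
Hypotheses (e_sym : symmetric e) (e_irr : irreflexive e).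
Hypothesis c_packing : packing_coloring e 3 c.

Lemma packing3_range x : 1 <= c x <= 3.
Proof. exact: (proj1 c_packing). Qed.

Lemma packing_within_neq x y j :
  x != y -> within e j x y -> j <= maxn (c x) (c y) -> c x != c y.
Proof.
move=> neq_xy w_xy le_j; apply/eqP => c_xy.
rewrite -c_xy maxnn in le_j.
by move: (proj2 c_packing x y neq_xy c_xy); rewrite /dist_gt (within_mono le_j w_xy).
Qed.

Lemma packing_adj_neq x y : e x y -> c x != c y.
Proof.
move=> e_xy; apply: packing_within_neq.
- by apply: contraTneq e_xy => ->; rewrite e_irr.
- by apply: (within_path (s := [:: y])); rewrite /= e_xy.
- by have := packing3_range x; rewrite /=; lia.
Qed.

Lemma packing3_no_path_2_3 a b x y :
  e a b -> e b x -> e x y -> a != x -> a != y -> b != y -> (c x, c y) != (2, 3).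
Proof.
move=> e_ab e_bx e_xy neq_ax neq_ay neq_by; apply/eqP => -[c_x c_y].
have w_by : within e 2 b y by apply: (within_path (s := [:: x; y])); rewrite /= e_bx e_xy.
have w_ax : within e 2 a x by apply: (within_path (s := [:: b; x])); rewrite /= e_ab e_bx.
have w_ay : within e 3 a y.
  by apply: (within_path (s := [:: b; x; y])); rewrite /= e_ab e_bx e_xy.
have := packing_adj_neq e_bx; have := packing_within_neq neq_by w_by.
have := packing_adj_neq e_ab; have := packing_within_neq neq_ax w_ax.
have := packing_within_neq neq_ay w_ay.
have := packing3_range a; have := packing3_range b.
rewrite c_x c_y; lia.
Qed.

Lemma packing3_deg3_neq1 w x y z :
  e w x -> e w y -> e w z -> x != y -> y != z -> x != z -> c w != 1.
Proof.
move=> e_wx e_wy e_wz neq_xy neq_yz neq_xz; apply/eqP => c_w.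
have nbr_gt1 s : e w s -> 1 < c s.
  by move=> e_ws; have := packing_adj_neq e_ws; have := packing3_range s; rewrite c_w; lia.
have nbr_neq s t : e w s -> e w t -> s != t -> c s != c t.
  move=> e_ws e_wt neq_st; apply: packing_within_neq neq_st _ _.
    by apply: (within_path (s := [:: w; t])); rewrite /= e_sym e_ws e_wt.
  by have := nbr_gt1 s e_ws; rewrite /=; lia.
have := nbr_neq x y e_wx e_wy neq_xy; have := nbr_neq y z e_wy e_wz neq_yz.
have := nbr_neq x z e_wx e_wz neq_xz.
have := nbr_gt1 x e_wx; have := nbr_gt1 y e_wy; have := nbr_gt1 z e_wz.
have := packing3_range x; have := packing3_range y; have := packing3_range z; lia.
Qed.

Section Walk.

Variable p : nat -> T.
Hypothesis p_walk : forall i, e (p i) (p i.+1).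
Hypotheses (p_sep2 : forall i, p i != p i.+2) (p_sep3 : forall i, p i != p i.+3).

Lemma walk_color1_alternate i : 2 <= i -> (c (p i.+1) == 1) = (c (p i) != 1).
Proof.
case: i => [|[|m]] // _.
have adj := packing_adj_neq (p_walk m.+2).
have [c_m2|c_m2] /= := eqVneq (c (p m.+2)) 1.
  by apply/negbTE; rewrite -c_m2 eq_sym.
apply/negPn/negP => c_m3.
have forward := packing3_no_path_2_3 (p_walk m) (p_walk m.+1) (p_walk m.+2)
  (p_sep2 m) (p_sep3 m) (p_sep2 m.+1).
have backward : (c (p m.+3), c (p m.+2)) != (2, 3).
  by apply: (packing3_no_path_2_3 (a := p m.+4.+1) (b := p m.+4));
    rewrite 1?e_sym ?p_walk // eq_sym ?p_sep2 ?p_sep3.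
move: forward backward; rewrite !xpair_eqE.
by have := packing3_range (p m.+2); have := packing3_range (p m.+3); lia.
Qed.

Lemma walk_color1_parity i j :
  2 <= i -> (c (p (i + j)) == 1) = (c (p i) == 1) (+) odd j.
Proof.
move=> le2i; elim: j => [|j IH]; first by rewrite addn0 addbF.
by rewrite addnS walk_color1_alternate ?IH ?addbN //; apply: leq_trans (leq_addr _ _).
Qed.

End Walk.

End PackingThree.

Section CycleWithTwoLeaves.

Variables (n : nat) (u v : 'I_n).
Hypothesis n_gt3 : 3 < n.

Let n_gt0 : 0 < n. Proof. exact: leq_ltn_trans n_gt3. Qed.

Lemma H_adj_sym : symmetric (H_adj u v).
Proof. by move=> [i|b] [j|b'] //=; rewrite /cycle_adj orbC. Qed.

Lemma H_adj_irr : irreflexive (H_adj u v).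
Proof.
move=> [i|b] //=; rewrite /cycle_adj orbb; apply/negbTE/eqP.
have := ltn_ord i; case: (ltngtP i.+1 n) => [lt_i1n|//|eq_i1n].
  by rewrite modn_small //; lia.
by rewrite eq_i1n modnn; lia.
Qed.

Definition cyc (m : nat) : 'I_n + bool := inl (Ordinal (ltn_pmod m n_gt0)).

Lemma cyc_mod (w : 'I_n) m : m = w %[mod n] -> cyc m = inl w.
Proof. by move=> eq_mw; congr inl; apply: val_inj; rewrite /= eq_mw modn_small. Qed.

Lemma cyc_adj m : H_adj u v (cyc m) (cyc m.+1).
Proof. by rewrite /= /cycle_adj /= -addn1 modnDml addn1 eqxx. Qed.

Lemma cyc_eq a b : (cyc a == cyc b) = (a == b %[mod n]).
Proof.
apply/eqP/eqP => [eq_ab | eq_ab]; last by congr inl; apply: val_inj.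
by move: (congr1 (fun x => if x is inl i then val i else 0) eq_ab).
Qed.

Lemma cyc_neq m j : 0 < j < n -> cyc m != cyc (m + j).
Proof.
move=> /andP [j_gt0 lt_jn].
by rewrite cyc_eq -{1}(addn0 m) eqn_modDl mod0n modn_small // eq_sym -lt0n.
Qed.

Lemma cyc_sep2 i : cyc i != cyc i.+2.
Proof. by rewrite -addn2 cyc_neq // (ltn_trans _ n_gt3). Qed.

Lemma cyc_sep3 i : cyc i != cyc i.+3.
Proof. by rewrite -addn3 cyc_neq. Qed.

Lemma H_attachment_color_neq1 c (w : 'I_n) b :
  packing_coloring (H_adj u v) 3 c -> H_adj u v (inl w) (inr b) -> c (inl w) != 1.
Proof.
move=> c_packing adj_wb; pose m := (w + n).-1.
have cyc_w : cyc m.+1 = inl w by apply: cyc_mod; rewrite prednK ?modnDr //; lia.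
rewrite -cyc_w; apply: (packing3_deg3_neq1 H_adj_sym H_adj_irr c_packing
  (x := cyc m) (y := cyc m.+2) (z := inr b)) => //.
- by rewrite H_adj_sym cyc_adj.
- exact: cyc_adj.
- by rewrite cyc_w.
- exact: cyc_sep2.
Qed.

Lemma H_attachment_color1_parity c (w w' : 'I_n) :
  packing_coloring (H_adj u v) 3 c ->
  (c (inl w') == 1) = (c (inl w) == 1) (+) odd ((w' + n - w) %% n).
Proof.
move=> c_packing; have lt_wn := ltn_ord w.
have parity := walk_color1_parity H_adj_sym H_adj_irr c_packing cyc_adj cyc_sep2 cyc_sep3.
have cyc_w : cyc (w + n) = inl w by apply: cyc_mod; rewrite modnDr.
have cyc_w' : cyc (w + n + (w' + n - w) %% n) = inl w'.
  apply: cyc_mod; rewrite modnDmr.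
  have -> : w + n + (w' + n - w) = 2 * n + w' by lia.
  by rewrite modnMDl.
by rewrite -cyc_w' -cyc_w parity //; lia.
Qed.

End CycleWithTwoLeaves.

Theorem mainTheorem9 (n : nat) (u v : 'I_n) (k : nat) :
  4 <= n -> cycle_dist u v = 2 * k + 1 ->
  packing_chromatic_ge (@H_adj n u v) 4.
Proof.
move=> n_gt3 dist_uv K c c_packing; rewrite leqNgt; apply/negP => K_lt4.
have c_packing3 := packing_coloring_le (K_lt4 : K <= 3) c_packing.
have c_u := H_attachment_color_neq1 n_gt3 (b := false) c_packing3 (eqxx u).
have c_v := H_attachment_color_neq1 n_gt3 (b := true) c_packing3 (eqxx v).
have even_dist (w w' : 'I_n) :
    c (inl w) != 1 -> c (inl w') != 1 -> ~~ odd ((w' + n - w) %% n).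
  move=> /negbTE c_w /negbTE c_w'.
  by have := H_attachment_color1_parity n_gt3 w w' c_packing3; rewrite c_w c_w' addFb => <-.
have : odd (cycle_dist u v) by rewrite dist_uv addn1 /= oddM.
by rewrite /cycle_dist /minn; case: ifP => _; apply/negP; apply: even_dist.
Qed.
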